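(* Let $X\subset\mathbb{R}^2$ be a finite set of at least two distinct points. Then $$\lim_{k\to\infty}\frac{\ell^k_{\mathrm{MSTH}}(X)}{\ell^k_{\mathrm{OPT}}(X)}=\frac{L_{\mathrm{MST}}(X)}{L_{\mathrm{SMT}}(X)}.$$
   Context: All lengths are Euclidean. For a tree $T$ embedded in the plane, $\ell_{\max}(T)$ is the length of its longest edge. For a positive integer $k$, $\mathcal{C}(X,k)$ is the set of all trees whose vertex set is $X\cup S$ for some set $S\subset\mathbb{R}^2$ of at most $k$ additional points. $\ell^k_{\mathrm{OPT}}(X)=\inf\{\ell_{\max}(T): T\in\mathcal{C}(X,k)\}$ is the optimal bottleneck length. Let $e_1,\dots,e_{n-1}$ be the edges of a Euclidean minimum spanning tree on $X$ (the multiset of edge lengths does not depend on the choice of MST). The minimum spanning tree heuristic (MSTH) places $k$ degree-two Steiner points (''beads'') on these edges, $n_i\ge 0$ equally spaced beads on $e_i$ with $\sum_i n_i=k$, chosen so as to minimise the longest resulting edge; thus $\ell^k_{\mathrm{MSTH}}(X)=\min\{\max_i |e_i|/(n_i+1): n_i\in\mathbb{Z}_{\ge0},\ \sum_i n_i=k\}$. $L_{\mathrm{MST}}(X)$ is the total length of a minimum spanning tree on $X$, and $L_{\mathrm{SMT}}(X)$ is the total length of a Steiner minimal tree on $X$, i.e. the infimum of total edge length over all trees whose vertex set contains $X$ together with any finite number of additional points of the plane. *)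

From Stdlib Require Import Reals Lra List ClassicalEpsilon.
Import ListNotations.
Open Scope R_scope.

Definition pt := (R * R)%type.

Definition dist (p q : pt) : R :=
  sqrt ((fst p - fst q) ^ 2 + (snd p - snd q) ^ 2).

Definition edge_len (e : pt * pt) : R := dist (fst e) (snd e).

Inductive reach (E : list (pt * pt)) : pt -> pt -> Prop :=
| reach_refl u : reach E u u
| reach_step u v w : reach E u v -> (In (v, w) E \/ In (w, v) E) -> reach E u w.

(* (V, E) is a tree with vertex set V (listed without repetition):
   edges join vertices of V, the graph is connected, and |E| = |V| - 1.
   (A connected graph with |V|-1 edges has no loops/multi-edges/cycles.) *)
Definition is_tree (V : list pt) (E : list (pt * pt)) : Prop :=
  NoDup V /\ V <> [] /\
  (forall e, In e E -> In (fst e) V /\ In (snd e) V) /\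
  length E = (length V - 1)%nat /\
  (forall u v, In u V -> In v V -> reach E u v).

Definition total_length (E : list (pt * pt)) : R :=
  fold_right Rplus 0 (map edge_len E).

Definition max_edge (E : list (pt * pt)) : R :=
  fold_right Rmax 0 (map edge_len E).

Definition is_glb (S : R -> Prop) (m : R) : Prop :=
  (forall x, S x -> m <= x) /\ (forall m', (forall x, S x -> m' <= x) -> m' <= m).

Definition Rinf (S : R -> Prop) : R :=
  epsilon (inhabits 0) (fun m => is_glb S m).

(* T = (V,E) in C(X,k): vertex set X ∪ S with |S| <= k *)
Definition in_C (X : list pt) (k : nat) (V : list pt) (E : list (pt * pt)) : Prop :=
  is_tree V E /\ incl X V /\ (length V <= length X + k)%nat.

Definition ell_opt (X : list pt) (k : nat) : R :=
  Rinf (fun r => exists V E, in_C X k V E /\ r = max_edge E).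

Definition is_MST (X : list pt) (E : list (pt * pt)) : Prop :=
  is_tree X E /\ (forall E', is_tree X E' -> total_length E <= total_length E').

Definition L_MST (X : list pt) : R :=
  Rinf (fun L => exists E, is_tree X E /\ L = total_length E).

Definition L_SMT (X : list pt) : R :=
  Rinf (fun L => exists V E, is_tree V E /\ incl X V /\ L = total_length E).

(* MSTH with respect to the MST edge list E: ns gives n_i beads on e_i *)
Definition ell_msth (E : list (pt * pt)) (k : nat) : R :=
  Rinf (fun r => exists ns : list nat,
          length ns = length E /\ list_sum ns = k /\
          r = fold_right Rmax 0
                (map (fun p => edge_len (fst p) / INR (snd p + 1)) (combine E ns))).

(* Write Lm = L_MST(X) (the length of the MST E), Ls = L_SMT(X), n = |X|.
   - MSTH: placing floor(c |e|) beads on each edge gives ell_msth(k) <= Lm/k,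
     and |e_i| <= ell_msth(k) (n_i + 1) summed over the n-1 edges gives
     ell_msth(k) >= Lm/(k+n-1)                                  [msth_bounds].
   - OPT: a tree with at most n+k vertices has at most n+k-1 edges and length
     >= Ls, so ell_opt(k) >= Ls/(n+k-1)                           [opt_lower];
     conversely, cutting the edges of a Steiner tree of length < Ls + eps
     with m vertices into pieces of length <= h costs at most length/h new
     vertices, so ell_opt(k) <= (Ls+eps)/(k+n-m) for k >= m       [opt_upper].
   - Ls > 0 because two distinct terminals joined by a tree are at distance
     at most its total length                     [dist_le_total_length].
   Hence the ratio lies between T(1-a) - O(1/k) and T + O(1/k), T = Lm/Ls,
   for every a > 0, and a squeeze argument concludes               [squeeze]. *)

From Pilot Require Import Defs.
From Stdlib Require Import Reals List.
From Stdlib Require Import Lra Lia Classical ClassicalEpsilon ZArith.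
Import ListNotations.
Open Scope R_scope.
(* [Reals] also exports a [dist] (of metric spaces); use the Euclidean one. *)
Local Notation dist := Defs.dist.

Lemma reach_trans E a b c : reach E a b -> reach E b c -> reach E a c.
Proof.
  intros Hab Hbc; induction Hbc as [|u v w _ IH Hvw]; auto.
  exact (reach_step E a v w (IH Hab) Hvw).
Qed.

Lemma reach_edge E u v : In (u, v) E \/ In (v, u) E -> reach E u v.
Proof. intros H; eapply reach_step; [apply reach_refl | exact H]. Qed.

Lemma reach_sym E a b : reach E a b -> reach E b a.
Proof.
  intros H; induction H as [|u v w _ IH Hvw]; [apply reach_refl|].
  eapply reach_trans; [|exact IH]. apply reach_edge; tauto.
Qed.

Lemma reach_mono E E' a b :
  (forall x y, In (x, y) E -> reach E' x y) -> reach E a b -> reach E' a b.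
Proof.
  intros HE H; induction H as [|u v w _ IH Hvw]; [apply reach_refl|].
  eapply reach_trans; [exact IH|].
  destruct Hvw as [Hvw|Hvw]; [|apply reach_sym]; apply HE; exact Hvw.
Qed.

Lemma dist_euc_eq p q : dist p q = dist_euc (fst p) (snd p) (fst q) (snd q).
Proof. unfold dist, dist_euc, Rsqr; f_equal; ring. Qed.

Lemma dist_nonneg p q : 0 <= dist p q.
Proof. apply sqrt_pos. Qed.

Lemma dist_sym p q : dist p q = dist q p.
Proof. rewrite !dist_euc_eq; apply distance_symm. Qed.

Lemma dist_self p : dist p p = 0.
Proof. rewrite dist_euc_eq; apply distance_refl. Qed.

Lemma dist_triangle x y z : dist x z <= dist x y + dist y z.
Proof. rewrite !dist_euc_eq; apply triangle. Qed.

Lemma dist_pos p q : p <> q -> 0 < dist p q.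
Proof.
  intros Hpq; destruct p as [a b], q as [c d]; rewrite dist_euc_eq; cbn [fst snd].
  apply sqrt_lt_R0.
  pose proof (Rle_0_sqr (a - c)); pose proof (Rle_0_sqr (b - d)).
  destruct (Req_dec a c) as [<-|Hac]; [destruct (Req_dec b d) as [<-|Hbd]|].
  - congruence.
  - pose proof (Rlt_0_sqr (b - d) ltac:(lra)); lra.
  - pose proof (Rlt_0_sqr (a - c) ltac:(lra)); lra.
Qed.
(* A nonempty set of nonnegative reals has a greatest lower bound, by
   completeness applied to its reflection. *)
Lemma glb_exists (S : R -> Prop) :
  (exists x, S x) -> (forall x, S x -> 0 <= x) -> exists m, is_glb S m.
Proof.
  intros [x Hx] Hlb.
  destruct (completeness (fun y => S (- y))) as [M [HM1 HM2]].
  - exists 0; intros y Hy; apply Hlb in Hy; lra.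
  - exists (- x); rewrite Ropp_involutive; exact Hx.
  - exists (- M); split.
    + intros z Hz. assert (- z <= M) by (apply HM1; rewrite Ropp_involutive; exact Hz). lra.
    + intros m' Hm'. assert (M <= - m') by (apply HM2; intros y Hy; apply Hm' in Hy; lra). lra.
Qed.

Section Infimum.
Variable S : R -> Prop.
Hypothesis S_nonneg : forall x, S x -> 0 <= x.

Lemma Rinf_glb : (exists x, S x) -> is_glb S (Rinf S).
Proof. intros Hne; unfold Rinf; apply epsilon_spec, glb_exists; assumption. Qed.

Lemma Rinf_le x : S x -> Rinf S <= x.
Proof. intros Hx; apply (Rinf_glb (ex_intro _ x Hx)); exact Hx. Qed.

Lemma Rinf_ge m : (exists x, S x) -> (forall x, S x -> m <= x) -> m <= Rinf S.
Proof. intros Hne Hm; apply (Rinf_glb Hne); exact Hm. Qed.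

Lemma Rinf_nonneg : (exists x, S x) -> 0 <= Rinf S.
Proof. intros Hne; apply Rinf_ge; assumption. Qed.

Lemma Rinf_approx eps : (exists x, S x) -> 0 < eps -> exists x, S x /\ x < Rinf S + eps.
Proof.
  intros Hne Heps. destruct (Rinf_glb Hne) as [_ Hgreatest].
  apply NNPP; intros Hnone.
  assert (Rinf S + eps <= Rinf S); [|lra].
  apply Hgreatest; intros x Hx. apply Rnot_lt_le; intros Hlt. apply Hnone; eauto.
Qed.

End Infimum.

Lemma nat_floor x : 0 <= x -> exists n : nat, INR n <= x < INR n + 1.
Proof.
  intros Hx. destruct (archimed x) as [H1 H2].
  assert (Hz : (0 < up x)%Z) by (apply lt_IZR; lra).
  exists (Z.to_nat (up x - 1)).
  rewrite INR_IZR_INZ, Z2Nat.id by lia. rewrite minus_IZR. simpl. lra.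
Qed.

Lemma Rdiv_nonneg a b : 0 <= a -> 0 < b -> 0 <= a / b.
Proof. intros Ha Hb; apply Rmult_le_pos; [exact Ha | left; apply Rinv_0_lt_compat; exact Hb]. Qed.

Lemma Rmax_list_nonneg (l : list R) : 0 <= fold_right Rmax 0 l.
Proof. induction l as [|a l IH]; simpl; [lra|]. eapply Rle_trans; [exact IH | apply Rmax_r]. Qed.

Lemma Rmax_list_lub (l : list R) B :
  0 <= B -> (forall y, In y l -> y <= B) -> fold_right Rmax 0 l <= B.
Proof.
  intros HB H; induction l as [|a l IH]; simpl; [exact HB|].
  apply Rmax_lub; [apply H; left; reflexivity | apply IH; intros; apply H; right; assumption].
Qed.

Lemma sum_le_length_max (l : list R) :
  fold_right Rplus 0 l <= INR (length l) * fold_right Rmax 0 l.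
Proof.
  induction l as [|a l IH]; cbn [fold_right length]; [lra|]. rewrite S_INR.
  pose proof (Rmax_l a (fold_right Rmax 0 l)); pose proof (Rmax_r a (fold_right Rmax 0 l)).
  pose proof (Rmult_le_compat_l (INR (length l)) _ _ (pos_INR _) H0). lra.
Qed.

Lemma edge_len_nonneg e : 0 <= edge_len e.
Proof. apply dist_nonneg. Qed.

Lemma total_length_nonneg E : 0 <= total_length E.
Proof.
  induction E as [|e E IH]; unfold total_length in *; simpl; [lra|].
  pose proof (edge_len_nonneg e); lra.
Qed.

Lemma max_edge_nonneg E : 0 <= max_edge E.
Proof. apply Rmax_list_nonneg. Qed.

Lemma max_edge_le E h : 0 <= h -> (forall e, In e E -> edge_len e <= h) -> max_edge E <= h.
Proof.
  intros Hh H; apply Rmax_list_lub; [exact Hh|].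
  intros y Hy; apply in_map_iff in Hy as [e [<- He]]; auto.
Qed.

Lemma total_le_max E : total_length E <= INR (length E) * max_edge E.
Proof. rewrite <- (length_map edge_len); apply sum_le_length_max. Qed.

Definition lerp (u v : pt) (t : R) : pt :=
  (fst u + t * (fst v - fst u), snd u + t * (snd v - snd u)).

Lemma dist_lerp_left u v t : dist u (lerp u v t) = Rabs t * dist u v.
Proof.
  unfold dist, lerp; cbn [fst snd].
  replace ((fst u - (fst u + t * (fst v - fst u))) ^ 2 + (snd u - (snd u + t * (snd v - snd u))) ^ 2)
    with (t * t * ((fst u - fst v) ^ 2 + (snd u - snd v) ^ 2)) by ring.
  rewrite sqrt_mult_alt by apply Rle_0_sqr. f_equal. rewrite <- sqrt_Rsqr_abs. reflexivity.
Qed.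

Lemma dist_lerp_right u v t : dist (lerp u v t) v = Rabs (1 - t) * dist u v.
Proof.
  unfold dist, lerp; cbn [fst snd].
  replace ((fst u + t * (fst v - fst u) - fst v) ^ 2 + (snd u + t * (snd v - snd u) - snd v) ^ 2)
    with ((1 - t) * (1 - t) * ((fst u - fst v) ^ 2 + (snd u - snd v) ^ 2)) by ring.
  rewrite sqrt_mult_alt by apply Rle_0_sqr. f_equal. rewrite <- sqrt_Rsqr_abs. reflexivity.
Qed.

Lemma lerp_inj u v t s : u <> v -> lerp u v t = lerp u v s -> t = s.
Proof.
  intros Huv H. unfold lerp in H. injection H as H1 H2.
  destruct u as [u1 u2], v as [v1 v2]; cbn [fst snd] in *.
  destruct (Req_dec v1 u1).
  - destruct (Req_dec v2 u2); [subst; congruence|].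
    apply Rmult_eq_reg_r with (v2 - u2); lra.
  - apply Rmult_eq_reg_r with (v1 - u1); lra.
Qed.

(* Every open piece of a non-degenerate segment contains a point outside a
   given finite set: the segment is injectively parametrized by [lerp]. *)
Lemma fresh_point_on_segment u v (V : list pt) : u <> v -> forall a b, a < b ->
  exists t, a < t < b /\ ~ In (lerp u v t) V.
Proof.
  intros Huv. induction V as [|q V IH]; intros a b Hab.
  - exists ((a + b) / 2). split; [lra | simpl; tauto].
  - destruct (classic (exists t0, lerp u v t0 = q /\ a < t0 < b)) as [[t0 [Hq Ht0]]|Hnot].
    + destruct (IH a t0 ltac:(lra)) as [t [Ht HtV]]. exists t. split; [lra|].
      intros [Heq|HinV]; [|tauto]. rewrite <- Hq in Heq. apply lerp_inj in Heq; auto. lra.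
    + destruct (IH a b Hab) as [t [Ht HtV]]. exists t. split; [exact Ht|].
      intros [Heq|HinV]; [|tauto]. apply Hnot. exists t. auto.
Qed.

Lemma insert_vertex V E1 E2 u v p :
  is_tree V (E1 ++ (u, v) :: E2) -> ~ In p V -> is_tree (p :: V) (E1 ++ (u, p) :: (p, v) :: E2).
Proof.
  intros [ND [NE [Hin [Hlen Hconn]]]] Hp.
  set (E' := E1 ++ (u, p) :: (p, v) :: E2).
  assert (HinE' : forall e, In e (E1 ++ E2) \/ e = (u, p) \/ e = (p, v) -> In e E').
  { intros e [He|[He|He]]; unfold E'; apply in_or_app;
      [apply in_app_or in He as [He|He]|..]; subst; simpl; auto. }
  assert (Hold : forall a b, reach (E1 ++ (u, v) :: E2) a b -> reach E' a b).
  { intros a b. apply reach_mono. intros x y Hxy.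
    apply in_app_iff in Hxy as [Hxy|[Hxy|Hxy]].
    - apply reach_edge; left; apply HinE'; left; apply in_or_app; auto.
    - injection Hxy as <- <-. apply reach_trans with p; apply reach_edge; left; apply HinE'; auto.
    - apply reach_edge; left; apply HinE'; left; apply in_or_app; auto. }
  assert (Hu : In u V /\ In v V) by (apply (Hin (u, v)); apply in_or_app; simpl; auto).
  assert (Hto_u : forall a, In a (p :: V) -> reach E' a u).
  { intros a [<-|Ha].
    - apply reach_edge; right; apply HinE'; auto.
    - apply Hold, Hconn; tauto. }
  split; [constructor; assumption|]. split; [discriminate|]. split; [|split].
  - intros e He. unfold E' in He. apply in_app_iff in He as [He|[He|[He|He]]];
      try (subst e; simpl; tauto).
    + assert (In e (E1 ++ (u, v) :: E2)) by (apply in_or_app; auto). apply Hin in H; simpl; tauto.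
    + assert (In e (E1 ++ (u, v) :: E2)) by (apply in_or_app; simpl; auto). apply Hin in H; simpl; tauto.
  - unfold E'. rewrite length_app in *. simpl in *. destruct V; [congruence|]. simpl in *. lia.
  - intros a b Ha Hb. apply reach_trans with u; auto. apply reach_sym; auto.
Qed.

(* On a segment uv with h <= |uv| < (M+1) h there is a fresh point p with
   |up| <= h and |pv| < M h: the first step of cutting uv into short pieces. *)
Lemma cut_point u v (V : list pt) h M : 0 < h -> 0 < M ->
  h <= dist u v < (M + 1) * h ->
  exists p, ~ In p V /\ dist u p <= h /\ dist p v < M * h.
Proof.
  intros Hh HM [Hlo Hhi]. set (d := dist u v) in *.
  assert (Hd : 0 < d) by lra.
  assert (Huv : u <> v) by (intros ->; unfold d in Hd; rewrite dist_self in Hd; lra).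
  set (lo := Rmax 0 (1 - M * h / d)). set (hi := h / d).
  assert (Hhi1 : hi <= 1) by (unfold hi; apply Rmult_le_reg_r with d; auto; field_simplify; lra).
  assert (Hlohi : lo < hi).
  { unfold lo, hi. apply Rmax_lub_lt.
    - apply Rdiv_lt_0_compat; lra.
    - apply Rmult_lt_reg_r with d; auto. field_simplify; lra. }
  destruct (fresh_point_on_segment u v V Huv lo hi Hlohi) as [t [[Hlot Hthi] HtV]].
  assert (Ht : 0 < t /\ 1 - M * h / d < t).
  { unfold lo in Hlot; split; eapply Rle_lt_trans; [apply Rmax_l | | apply Rmax_r |]; exact Hlot. }
  exists (lerp u v t). split; [exact HtV|]. split.
  - rewrite dist_lerp_left; fold d. rewrite Rabs_right by lra.
    unfold hi in Hthi. apply Rmult_lt_compat_r with (r := d) in Hthi; [|exact Hd].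
    replace (h / d * d) with h in Hthi by (field; lra). lra.
  - rewrite dist_lerp_right; fold d. rewrite Rabs_right by lra.
    assert (Hlt : 1 - t < M * h / d) by lra.
    apply Rmult_lt_compat_r with (r := d) in Hlt; [|exact Hd].
    replace (M * h / d * d) with (M * h) in Hlt by (field; lra). exact Hlt.
Qed.

Lemma subdivide_edge N : forall V E1 E2 u v h, 0 < h -> is_tree V (E1 ++ (u, v) :: E2) ->
  dist u v < (INR N + 1) * h ->
  exists V' F, is_tree V' (E1 ++ F ++ E2) /\ incl V V' /\ (length V' <= length V + N)%nat /\
    (forall e, In e F -> edge_len e <= h).
Proof.
  induction N as [|N IH]; intros V E1 E2 u v h Hh HT Hd.
  { exists V, [(u, v)]. split; [exact HT|]. split; [apply incl_refl|]. split; [lia|].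
    intros e [<-|[]]. unfold edge_len; simpl in *. lra. }
  destruct (Rlt_dec (dist u v) h) as [Hshort|Hlong].
  { exists V, [(u, v)]. split; [exact HT|]. split; [apply incl_refl|]. split; [lia|].
    intros e [<-|[]]. unfold edge_len; simpl. lra. }
  rewrite S_INR in Hd.
  destruct (cut_point u v V h (INR N + 1) Hh ltac:(pose proof (pos_INR N); lra) ltac:(lra))
    as [p [HpV [Hup Hpv]]].
  assert (HT' : is_tree (p :: V) ((E1 ++ [(u, p)]) ++ (p, v) :: E2))
    by (rewrite <- app_assoc; exact (insert_vertex V E1 E2 u v p HT HpV)).
  destruct (IH (p :: V) (E1 ++ [(u, p)]) E2 p v h Hh HT' Hpv) as [V' [F [HT'' [Hinc [Hlen HF]]]]].
  exists V', ((u, p) :: F). split; [|split; [|split]].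
  - rewrite <- app_assoc in HT''. exact HT''.
  - intros x Hx; apply Hinc; right; exact Hx.
  - simpl in Hlen; lia.
  - intros e [<-|He]; [exact Hup | exact (HF e He)].
Qed.

Lemma subdivide_tree h : 0 < h -> forall Todo V Done, is_tree V (Done ++ Todo) ->
  (forall e, In e Done -> edge_len e <= h) ->
  exists V' E', is_tree V' E' /\ incl V V' /\
    INR (length V') <= INR (length V) + total_length Todo / h /\
    (forall e, In e E' -> edge_len e <= h).
Proof.
  intros Hh Todo. induction Todo as [|[u v] Todo IH]; intros V Done HT HDone.
  - exists V, Done. rewrite app_nil_r in HT.
    split; [exact HT|]. split; [apply incl_refl|]. split; [|exact HDone].
    unfold total_length; simpl. unfold Rdiv. rewrite Rmult_0_l. lra.
  - assert (Hx : 0 <= dist u v / h) by (apply Rdiv_nonneg; [apply dist_nonneg | exact Hh]).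
    destruct (nat_floor _ Hx) as [N [HN1 HN2]].
    assert (Hd : dist u v < (INR N + 1) * h).
    { apply Rmult_lt_compat_r with (r := h) in HN2; [|exact Hh].
      replace (dist u v / h * h) with (dist u v) in HN2 by (field; lra). exact HN2. }
    destruct (subdivide_edge N V Done Todo u v h Hh HT Hd) as [V1 [F [HT1 [Hinc1 [Hlen1 HF]]]]].
    rewrite app_assoc in HT1.
    destruct (IH V1 (Done ++ F) HT1) as [V' [E' [HT' [Hinc' [Hlen' HE']]]]].
    { intros e He. apply in_app_iff in He as [He|He]; auto. }
    exists V', E'. split; [exact HT'|]. split; [eapply incl_tran; eauto|]. split; [|exact HE'].
    apply le_INR in Hlen1. rewrite plus_INR in Hlen1.
    change (total_length ((u, v) :: Todo)) with (dist u v + total_length Todo).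
    unfold Rdiv in *. rewrite Rmult_plus_distr_r. lra.
Qed.

Lemma reach_nil x y : reach [] x y -> x = y.
Proof. intros H; induction H as [|u v w _ IH [[]|[]]]; reflexivity. Qed.

Lemma reach_cons_cases a b E x y : reach ((a, b) :: E) x y ->
  reach E x y \/ (reach E x a /\ reach E b y) \/ (reach E x b /\ reach E a y).
Proof.
  intros H. induction H as [u|u v w _ IH Hvw]; [left; apply reach_refl|].
  assert (Hstep : reach E v w \/ (v = a /\ w = b) \/ (v = b /\ w = a)).
  { destruct Hvw as [[Hab|Hvw]|[Hab|Hvw]];
      try (injection Hab as <- <-; tauto); left; apply reach_edge; tauto. }
  destruct IH as [I|[[I1 I2]|[I1 I2]]]; destruct Hstep as [R|[[-> ->]|[-> ->]]];
    eauto 7 using reach_trans, reach_sym, reach_refl.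
Qed.

Definition in_component (E : list (pt * pt)) (x : pt) (e : pt * pt) : bool :=
  if excluded_middle_informative (reach E x (fst e)) then true else false.

Lemma reach_in_component E x a :
  reach E x a -> reach (filter (in_component E x) E) x a.
Proof.
  intros H. induction H as [u|u v w H IH Hvw]; [apply reach_refl|].
  apply reach_step with v; [exact IH|].
  destruct Hvw as [Hvw|Hvw]; [left|right]; apply filter_In; split; auto;
    unfold in_component; simpl; destruct excluded_middle_informative as [_|Hn]; auto.
  exfalso; apply Hn. apply reach_trans with v; auto. apply reach_edge; auto.
Qed.

Lemma reach_off_component E x b y : reach E b y -> ~ reach E x b ->
  ~ reach E x y /\ reach (filter (fun e => negb (in_component E x e)) E) b y.
Proof.
  intros H. induction H as [u|u v w H IH Hvw]; intros Hb; [split; [exact Hb | apply reach_refl]|].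
  destruct (IH Hb) as [Hv Hr].
  assert (Hw : ~ reach E x w).
  { intros Hw. apply Hv. apply reach_trans with w; auto. apply reach_edge; tauto. }
  split; [exact Hw|]. apply reach_step with v; [exact Hr|].
  destruct Hvw as [Hvw|Hvw]; [left|right]; apply filter_In; split; auto;
    unfold in_component; simpl; destruct excluded_middle_informative; tauto.
Qed.

Lemma total_length_filter f E : total_length E =
  total_length (filter f E) + total_length (filter (fun e => negb (f e)) E).
Proof. induction E as [|e E IH]; unfold total_length in *; simpl; [lra|]. destruct (f e); simpl; lra. Qed.

Lemma disjoint_walks E x p q y : reach E x p -> reach E q y -> ~ reach E x y ->
  exists E1 E2, (length E1 <= length E)%nat /\ (length E2 <= length E)%nat /\
    total_length E1 + total_length E2 = total_length E /\ reach E1 x p /\ reach E2 q y.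
Proof.
  intros Hxp Hqy Hxy.
  assert (Hq : ~ reach E x q) by (intros Hxq; apply Hxy; eapply reach_trans; eauto).
  exists (filter (in_component E x) E), (filter (fun e => negb (in_component E x e)) E).
  split; [apply filter_length_le|]. split; [apply filter_length_le|].
  split; [symmetry; apply total_length_filter|].
  split; [apply reach_in_component; exact Hxp | apply (reach_off_component E x q y Hqy Hq)].
Qed.

Lemma dist_le_total_length E x y : reach E x y -> dist x y <= total_length E.
Proof.
  remember (length E) as n eqn:Hn. assert (Hle : (length E <= n)%nat) by lia. clear Hn.
  revert E Hle x y. induction n as [|n IHn]; intros E Hle x y H.
  { destruct E; [|simpl in Hle; lia]. apply reach_nil in H as ->.
    rewrite dist_self. apply total_length_nonneg. }
  destruct E as [|[a b] E].
  { apply reach_nil in H as ->. rewrite dist_self. apply total_length_nonneg. }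
  simpl in Hle. change (total_length ((a, b) :: E)) with (dist a b + total_length E).
  pose proof (dist_nonneg a b).
  destruct (classic (reach E x y)) as [Hxy|Hxy].
  { pose proof (IHn E ltac:(lia) x y Hxy). lra. }
  assert (Hpair : forall p q, reach E x p -> reach E q y -> dist x p + dist q y <= total_length E).
  { intros p q Hxp Hqy.
    destruct (disjoint_walks E x p q y Hxp Hqy Hxy) as [E1 [E2 [Hl1 [Hl2 [Htot [H1 H2]]]]]].
    rewrite <- Htot. apply Rplus_le_compat; apply IHn; auto; lia. }
  destruct (reach_cons_cases a b E x y H) as [I|[[I1 I2]|[I1 I2]]]; [contradiction| |].
  - pose proof (Hpair a b I1 I2). pose proof (dist_triangle x a y). pose proof (dist_triangle a b y). lra.
  - pose proof (Hpair b a I1 I2). pose proof (dist_triangle x b y). pose proof (dist_triangle b a y).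
    rewrite (dist_sym b a) in *. lra.
Qed.

Lemma tree_has_vertex V E : is_tree V E -> (1 <= length V)%nat.
Proof. intros [_ [HV _]]. destruct V; [congruence | simpl; lia]. Qed.

Lemma L_MST_eq X E : is_MST X E -> L_MST X = total_length E.
Proof.
  intros [HT Hmin]. unfold L_MST.
  assert (Hnn : forall x, (exists E', is_tree X E' /\ x = total_length E') -> 0 <= x)
    by (intros x [E' [_ ->]]; apply total_length_nonneg).
  apply Rle_antisym.
  - apply Rinf_le; [exact Hnn | eauto].
  - apply Rinf_ge; [exact Hnn | eauto |]. intros x [E' [HT' ->]]. exact (Hmin E' HT').
Qed.

Lemma steiner_set_nonneg X r :
  (exists V E, is_tree V E /\ incl X V /\ r = total_length E) -> 0 <= r.
Proof. intros [V [E [_ [_ ->]]]]. apply total_length_nonneg. Qed.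

Lemma L_SMT_le X V E : is_tree V E -> incl X V -> L_SMT X <= total_length E.
Proof. intros HT Hinc. apply Rinf_le; [apply steiner_set_nonneg | eauto]. Qed.

Lemma L_SMT_pos X E : NoDup X -> (2 <= length X)%nat -> is_tree X E -> 0 < L_SMT X.
Proof.
  intros ND Hl HT. destruct X as [|x0 [|x1 X]]; simpl in Hl; try lia.
  assert (Hne : x0 <> x1) by (inversion ND as [|a l Hni _]; intros ->; apply Hni; left; reflexivity).
  apply Rlt_le_trans with (dist x0 x1); [apply dist_pos; exact Hne|].
  apply Rinf_ge; [apply steiner_set_nonneg | exists (total_length E), (x0 :: x1 :: X), E; auto using incl_refl |].
  intros r [V [E' [[_ [_ [_ [_ Hconn]]]] [Hinc ->]]]].
  apply dist_le_total_length, Hconn; apply Hinc; simpl; auto.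
Qed.

Lemma opt_set_nonneg X k r : (exists V E, in_C X k V E /\ r = max_edge E) -> 0 <= r.
Proof. intros [V [E [_ ->]]]. apply max_edge_nonneg. Qed.

(* A tree with at most n+k vertices has at most n+k-1 edges, so its longest
   edge is at least L_SMT / (n+k-1). *)
Lemma opt_lower X E k : is_tree X E -> (1 <= k)%nat ->
  L_SMT X / INR (length X + k - 1) <= ell_opt X k.
Proof.
  intros HT Hk. pose proof (tree_has_vertex X E HT) as HX.
  assert (HD : 0 < INR (length X + k - 1)) by (apply lt_0_INR; lia).
  apply Rinf_ge; [apply opt_set_nonneg | |].
  { exists (max_edge E), X, E. split; [|reflexivity]. split; [exact HT|]. split; [apply incl_refl | lia]. }
  intros r [V [E' [[HT' [Hinc Hlen]] ->]]].
  pose proof (L_SMT_le X V E' HT' Hinc) as Hsmt.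
  pose proof (total_le_max E') as Hmax.
  destruct HT' as [_ [_ [_ [HlenE _]]]].
  assert (Hedges : INR (length E') <= INR (length X + k - 1)) by (apply le_INR; lia).
  pose proof (Rmult_le_compat_r _ _ _ (max_edge_nonneg E') Hedges).
  apply Rmult_le_reg_r with (INR (length X + k - 1)); [exact HD|].
  replace (L_SMT X / INR (length X + k - 1) * INR (length X + k - 1)) with (L_SMT X) by (field; lra).
  lra.
Qed.

(* Conversely, subdividing a Steiner tree of length < L_SMT + eps with m
   vertices evenly gives ell_opt(k) <= (L_SMT + eps) / (k + n - m). *)
Lemma opt_upper X E eps : is_tree X E -> 0 < eps ->
  exists m : nat, forall k, (m <= k)%nat ->
    ell_opt X k <= (L_SMT X + eps) / INR (k + length X - m).
Proof.
  intros HT Heps.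
  assert (Hne : exists r, exists V E, is_tree V E /\ incl X V /\ r = total_length E)
    by (exists (total_length E), X, E; auto using incl_refl).
  pose proof (Rinf_nonneg _ (steiner_set_nonneg X) Hne) as HS0. fold (L_SMT X) in HS0.
  destruct (Rinf_approx _ (steiner_set_nonneg X) eps Hne Heps) as [L [[V0 [E0 [HT0 [Hinc0 ->]]]] HL]].
  fold (L_SMT X) in HL.
  exists (length V0). intros k Hk.
  set (W := INR (k + length X - length V0)).
  pose proof (tree_has_vertex X E HT) as HX.
  assert (HW : 0 < W) by (apply lt_0_INR; lia).
  set (h := (L_SMT X + eps) / W).
  assert (Hh : 0 < h) by (apply Rdiv_lt_0_compat; lra).
  destruct (subdivide_tree h Hh E0 V0 [] HT0 ltac:(simpl; tauto)) as [V' [E' [HT' [Hinc' [Hlen' HE']]]]].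
  assert (Hnew : total_length E0 / h < W).
  { apply Rmult_lt_reg_r with h; [exact Hh|].
    replace (total_length E0 / h * h) with (total_length E0) by (field; lra).
    unfold h. replace (W * ((L_SMT X + eps) / W)) with (L_SMT X + eps) by (field; lra). lra. }
  assert (Hcount : INR (length V') < INR (length X + k)).
  { replace (INR (length X + k)) with (INR (length V0) + W); [lra|].
    unfold W. rewrite <- plus_INR. f_equal. lia. }
  apply INR_lt in Hcount.
  apply Rle_trans with (max_edge E').
  - apply Rinf_le; [apply opt_set_nonneg|]. exists V', E'. split; [|reflexivity].
    split; [exact HT'|]. split; [eapply incl_tran; eauto | lia].
  - apply max_edge_le; [lra | exact HE'].
Qed.

(* MSTH with n beads on edge e yields pieces of length |e|/(n+1). *)
Definition bead_len (p : (pt * pt) * nat) : R := edge_len (fst p) / INR (snd p + 1).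

Definition msth_cost (E : list (pt * pt)) (ns : list nat) : R :=
  fold_right Rmax 0 (map bead_len (combine E ns)).

Definition msth_set (E : list (pt * pt)) (k : nat) (r : R) : Prop :=
  exists ns, length ns = length E /\ list_sum ns = k /\ r = msth_cost E ns.

Lemma ell_msth_unfold E k : ell_msth E k = Rinf (msth_set E k).
Proof. reflexivity. Qed.

Lemma msth_set_nonneg E k r : msth_set E k r -> 0 <= r.
Proof. intros [ns [_ [_ ->]]]. apply Rmax_list_nonneg. Qed.

Lemma INR_succ n : INR (n + 1) = INR n + 1.
Proof. rewrite plus_INR; simpl; ring. Qed.

(* Each edge satisfies |e_i| <= cost * (n_i + 1); summing over the edges. *)
Lemma msth_cost_lower E ns : length ns = length E ->
  total_length E <= msth_cost E ns * (INR (list_sum ns) + INR (length E)).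
Proof.
  revert ns. induction E as [|e E IH]; intros ns Hl.
  { unfold total_length; simpl. rewrite Rplus_0_r. apply Rmult_le_pos; [apply Rmax_list_nonneg | apply pos_INR]. }
  destruct ns as [|n0 ns]; [discriminate|]. injection Hl as Hl.
  specialize (IH ns Hl). unfold msth_cost in *.
  change (total_length (e :: E)) with (edge_len e + total_length E).
  cbn [combine map fold_right list_sum length].
  set (M := fold_right Rmax 0 (map bead_len (combine E ns))) in *.
  set (t0 := bead_len (e, n0)).
  pose proof (Rmax_l t0 M); pose proof (Rmax_r t0 M).
  assert (Hpos : 0 < INR n0 + 1) by (pose proof (pos_INR n0); lra).
  assert (He : edge_len e = t0 * (INR n0 + 1)) by (unfold t0, bead_len; simpl; rewrite INR_succ; field; lra).
  rewrite plus_INR, S_INR.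
  pose proof (pos_INR (list_sum ns)); pose proof (pos_INR (length E)).
  pose proof (Rmult_le_compat_r (INR (list_sum ns) + INR (length E)) M (Rmax t0 M) ltac:(lra) ltac:(lra)).
  pose proof (Rmult_le_compat_r (INR n0 + 1) t0 (Rmax t0 M) ltac:(lra) ltac:(lra)).
  fold (list_sum ns). lra.
Qed.

(* Putting floor(c |e|) beads on every edge uses at most c L beads and makes
   every piece at most 1/c long. *)
Lemma bead_counts E c : 0 < c -> exists ns, length ns = length E /\
  INR (list_sum ns) <= c * total_length E /\
  (forall p, In p (combine E ns) -> bead_len p <= / c).
Proof.
  intros Hc. induction E as [|e E IH].
  { exists []. unfold total_length; simpl. split; [reflexivity|]. split; [lra | tauto]. }
  destruct IH as [ns [Hlen [Hsum Hpieces]]].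
  destruct (nat_floor (c * edge_len e)) as [n0 [Hn1 Hn2]];
    [apply Rmult_le_pos; [lra | apply edge_len_nonneg]|].
  exists (n0 :: ns). split; [simpl; lia|]. split.
  - simpl list_sum. rewrite plus_INR. change (total_length (e :: E)) with (edge_len e + total_length E). lra.
  - intros p [<-|Hp]; [|exact (Hpieces p Hp)].
    unfold bead_len; simpl. rewrite INR_succ.
    assert (Hpos : 0 < INR n0 + 1) by (pose proof (pos_INR n0); lra).
    apply Rmult_le_reg_r with (INR n0 + 1); [exact Hpos|].
    replace (edge_len e / (INR n0 + 1) * (INR n0 + 1)) with (edge_len e) by (field; lra).
    apply Rmult_le_reg_l with c; [exact Hc|].
    replace (c * (/ c * (INR n0 + 1))) with (INR n0 + 1) by (field; lra). lra.
Qed.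

(* With c = k / L the bead counts sum to at most k; the leftover beads go on
   the first edge, which only shortens its pieces. *)
Lemma msth_witness E k : E <> [] -> (1 <= k)%nat -> 0 < total_length E ->
  exists ns, msth_set E k (msth_cost E ns) /\ msth_cost E ns <= total_length E / INR k.
Proof.
  intros HE Hk HL.
  assert (HK : 0 < INR k) by (apply lt_0_INR; lia).
  set (c := INR k / total_length E).
  assert (Hc : 0 < c) by (apply Rdiv_lt_0_compat; assumption).
  destruct (bead_counts E c Hc) as [ns [Hlen [Hsum Hpieces]]].
  assert (Hsumk : (list_sum ns <= k)%nat).
  { apply INR_le. replace (INR k) with (c * total_length E) by (unfold c; field; lra). exact Hsum. }
  destruct E as [|e E]; [congruence|]. destruct ns as [|n0 ns]; [discriminate|].
  set (ns' := (n0 + (k - list_sum (n0 :: ns)))%nat :: ns).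
  exists ns'. split; [exists ns'; simpl in *; repeat split; lia|].
  replace (total_length (e :: E) / INR k) with (/ c) by (unfold c; field; lra).
  apply Rmax_list_lub; [left; apply Rinv_0_lt_compat; exact Hc|].
  intros y Hy. apply in_map_iff in Hy as [p [<- Hp]]. destruct Hp as [<-|Hp].
  - apply Rle_trans with (bead_len (e, n0)); [|apply Hpieces; left; reflexivity].
    unfold bead_len; simpl. rewrite !INR_succ, plus_INR.
    apply Rmult_le_compat_l; [apply edge_len_nonneg|].
    apply Rinv_le_contravar; [pose proof (pos_INR n0); lra|].
    pose proof (pos_INR (k - (n0 + list_sum ns))); lra.
  - apply Hpieces; right; exact Hp.
Qed.

Lemma msth_bounds E k : E <> [] -> (1 <= k)%nat -> 0 < total_length E ->
  total_length E / (INR k + INR (length E)) <= ell_msth E k <= total_length E / INR k.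
Proof.
  intros HE Hk HL. rewrite ell_msth_unfold.
  destruct (msth_witness E k HE Hk HL) as [ns [Hns Hcost]].
  assert (HK : 0 < INR k) by (apply lt_0_INR; lia). pose proof (pos_INR (length E)).
  split.
  - apply Rinf_ge; [apply msth_set_nonneg | eauto |].
    intros r [ns' [Hlen [Hsum ->]]]. pose proof (msth_cost_lower E ns' Hlen) as Hlow.
    rewrite Hsum in Hlow.
    apply Rmult_le_reg_r with (INR k + INR (length E)); [lra|].
    replace (total_length E / (INR k + INR (length E)) * (INR k + INR (length E)))
      with (total_length E) by (field; lra). exact Hlow.
  - eapply Rle_trans; [|exact Hcost]. apply Rinf_le; [apply msth_set_nonneg | exact Hns].
Qed.

Lemma ratio_upper Lm Ls K N A B : 0 < Ls -> 0 < K -> 0 <= N ->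
  0 <= A <= Lm / K -> Ls / (K + N) <= B ->
  A / B <= Lm / Ls + (Lm / Ls) * N / K.
Proof.
  intros HLs HK HN [HA0 HA] HB.
  assert (HB0 : 0 < Ls / (K + N)) by (apply Rdiv_lt_0_compat; lra).
  apply Rle_trans with ((Lm / K) / (Ls / (K + N))).
  - unfold Rdiv at 1 3. apply Rmult_le_compat; [exact HA0 | left; apply Rinv_0_lt_compat; lra | exact HA |].
    apply Rinv_le_contravar; assumption.
  - right. field. repeat split; lra.
Qed.

(* Lower estimate of the ratio from A >= Lm/(K+N) and B <= (1+a) Ls/(K+N+1-M):
   it is at least T/(1+a) * (1 - M/K) >= T (1-a) - T M/K with T = Lm/Ls. *)
Lemma ratio_lower Lm Ls a K N M A B : 0 < Lm -> 0 < Ls -> 0 < a -> 0 < K -> 0 <= N -> 0 <= M ->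
  0 < K + N + 1 - M -> Lm / (K + N) <= A -> 0 < B <= (Ls + a * Ls) / (K + N + 1 - M) ->
  (Lm / Ls) * (1 - a) - (Lm / Ls) * M / K <= A / B.
Proof.
  intros HLm HLs Ha HK HN HM HW HA [HB0 HB].
  set (W := K + N + 1 - M) in *. set (T := Lm / Ls).
  assert (HT : 0 < T) by (apply Rdiv_lt_0_compat; assumption).
  set (s := 1 / (1 + a)). set (rho := W / (K + N)).
  assert (Hs1 : 1 - a <= s).
  { unfold s. apply Rmult_le_reg_r with (1 + a); [lra|].
    replace (1 / (1 + a) * (1 + a)) with 1 by (field; lra). pose proof (Rle_0_sqr a). unfold Rsqr in *. lra. }
  assert (Hs2 : s <= 1).
  { unfold s. apply Rmult_le_reg_r with (1 + a); [lra|]. replace (1 / (1 + a) * (1 + a)) with 1 by (field; lra). lra. }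
  assert (Hs0 : 0 < s) by (apply Rdiv_lt_0_compat; lra).
  assert (Hrho : 1 - M / K <= rho).
  { unfold rho, W. apply Rmult_le_reg_r with (K * (K + N)); [apply Rmult_lt_0_compat; lra|].
    replace ((1 - M / K) * (K * (K + N))) with ((K - M) * (K + N)) by (field; lra).
    replace ((K + N + 1 - M) / (K + N) * (K * (K + N))) with ((K + N + 1 - M) * K) by (field; lra).
    pose proof (Rmult_le_pos _ _ HM HN). nra. }
  assert (Hratio : A / B >= T * s * rho).
  { apply Rle_ge. apply Rle_trans with ((Lm / (K + N)) / ((Ls + a * Ls) / W)).
    - right. unfold T, s, rho. field. repeat split; try lra. pose proof (Rmult_lt_0_compat _ _ Ha HLs). lra.
    - unfold Rdiv at 1 3. apply Rmult_le_compat; [apply Rdiv_nonneg; lra | |exact HA|].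
      + left; apply Rinv_0_lt_compat, Rdiv_lt_0_compat; [pose proof (Rmult_lt_0_compat _ _ Ha HLs); lra | exact HW].
      + apply Rinv_le_contravar; assumption. }
  assert (HMK : 0 <= M / K) by (apply Rdiv_nonneg; assumption).
  pose proof (Rmult_le_compat_l (T * s) _ _ ltac:(apply Rmult_le_pos; lra) Hrho).
  pose proof (Rmult_le_compat_r (M / K) (T * s) T HMK ltac:(pose proof (Rmult_le_compat_l T _ _ (Rlt_le _ _ HT) Hs2); lra)).
  pose proof (Rmult_le_compat_l T _ _ (Rlt_le _ _ HT) Hs1).
  replace (T * M / K) with (T * (M / K)) by (field; lra).
  lra.
Qed.

Lemma eventually_small C eps : 0 <= C -> 0 < eps ->
  exists N : nat, forall k : nat, (N <= k)%nat -> (1 <= k)%nat -> C / INR k < eps.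
Proof.
  intros HC Heps. destruct (nat_floor (C / eps)) as [N [_ HN]]; [apply Rdiv_nonneg; assumption|].
  exists (S N). intros k Hk Hk1.
  assert (HK : INR N + 1 <= INR k) by (rewrite <- S_INR; apply le_INR; exact Hk).
  assert (HKp : 0 < INR k) by (pose proof (pos_INR N); lra).
  apply Rmult_lt_reg_r with (INR k); [exact HKp|].
  replace (C / INR k * INR k) with C by (field; lra).
  apply Rmult_lt_compat_r with (r := eps) in HN; [|exact Heps].
  replace (C / eps * eps) with C in HN by (field; lra).
  pose proof (Rmult_le_compat_l eps _ _ (Rlt_le _ _ Heps) HK). lra.
Qed.

Lemma squeeze (u : nat -> R) T : 0 < T ->
  (exists C, 0 <= C /\ forall k, (1 <= k)%nat -> u k <= T + C / INR k) ->
  (forall a, 0 < a -> exists m D, 0 <= D /\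
     forall k, (m <= k)%nat -> (1 <= k)%nat -> T * (1 - a) - D / INR k <= u k) ->
  Un_cv (fun n => u (S n)) T.
Proof.
  intros HT [C [HC Hup]] Hlow eps Heps.
  destruct (Hlow (eps / (2 * T))) as [m [D [HD Hlow']]]; [apply Rdiv_lt_0_compat; lra|].
  destruct (eventually_small C eps HC Heps) as [N1 HN1].
  destruct (eventually_small D (eps / 2) HD ltac:(lra)) as [N2 HN2].
  exists (Nat.max m (Nat.max N1 N2)). intros n Hn. unfold R_dist.
  assert (Hk : (1 <= S n)%nat) by lia.
  pose proof (Hup (S n) Hk). pose proof (Hlow' (S n) ltac:(lia) Hk).
  pose proof (HN1 (S n) ltac:(lia) Hk). pose proof (HN2 (S n) ltac:(lia) Hk).
  replace (T * (1 - eps / (2 * T))) with (T - eps / 2) in * by (field; lra).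
  apply Rabs_def1; lra.
Qed.

Section MSTRatio.
Variables (X : list pt) (E : list (pt * pt)).
Hypotheses (X_nodup : NoDup X) (X_two : (2 <= length X)%nat) (E_mst : is_MST X E).

Let Lm := total_length E.
Let Ls := L_SMT X.
Let N := INR (length E).

Lemma mst_setting : 0 < Ls /\ 0 < Lm /\ E <> [] /\ length E = (length X - 1)%nat.
Proof.
  destruct E_mst as [HT _].
  assert (HLs : 0 < Ls) by exact (L_SMT_pos X E X_nodup X_two HT).
  assert (HlenE : length E = (length X - 1)%nat) by apply HT.
  assert (HE : E <> []) by (intros HE; rewrite HE in HlenE; simpl in HlenE; lia).
  pose proof (L_SMT_le X X E HT (incl_refl X)) as HLsLm.
  repeat split; try assumption. unfold Lm, Ls in *. lra.
Qed.

Lemma bounds_at k : (1 <= k)%nat ->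
  (Lm / (INR k + N) <= ell_msth E k <= Lm / INR k) /\ Ls / (INR k + N) <= ell_opt X k.
Proof.
  intros Hk. destruct mst_setting as [_ [HLm [HE HlenE]]]. destruct E_mst as [HT _].
  split; [exact (msth_bounds E k HE Hk HLm)|].
  replace (INR k + N) with (INR (length X + k - 1)); [exact (opt_lower X E k HT Hk)|].
  unfold N. rewrite HlenE, <- plus_INR. f_equal. lia.
Qed.

Lemma ratio_above : exists C, 0 <= C /\
  forall k, (1 <= k)%nat -> ell_msth E k / ell_opt X k <= Lm / Ls + C / INR k.
Proof.
  destruct mst_setting as [HLs [HLm _]].
  assert (HN : 0 <= N) by apply pos_INR.
  exists (Lm / Ls * N). split; [apply Rmult_le_pos; [apply Rdiv_nonneg|]; lra|].
  intros k Hk. destruct (bounds_at k Hk) as [[Hlow Hup] Hopt].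
  assert (HK : 0 < INR k) by (apply lt_0_INR; lia).
  apply ratio_upper; [exact HLs | exact HK | exact HN | | exact Hopt].
  split; [|exact Hup]. eapply Rle_trans; [|exact Hlow]. apply Rdiv_nonneg; lra.
Qed.

Lemma ratio_below a : 0 < a -> exists m D, 0 <= D /\
  forall k, (m <= k)%nat -> (1 <= k)%nat ->
  Lm / Ls * (1 - a) - D / INR k <= ell_msth E k / ell_opt X k.
Proof.
  intros Ha. destruct mst_setting as [HLs [HLm [_ HlenE]]]. destruct E_mst as [HT _].
  destruct (opt_upper X E (a * Ls) HT ltac:(apply Rmult_lt_0_compat; assumption)) as [m Hm].
  exists m, (Lm / Ls * INR m). split; [apply Rmult_le_pos; [apply Rdiv_nonneg | apply pos_INR]; lra|].
  intros k Hmk Hk. specialize (Hm k Hmk).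
  assert (HW : INR (k + length X - m) = INR k + N + 1 - INR m)
    by (unfold N; rewrite HlenE, minus_INR, !plus_INR, minus_INR by lia; simpl; ring).
  rewrite HW in Hm. destruct (bounds_at k Hk) as [[Hlow _] Hopt].
  assert (HK : 0 < INR k) by (apply lt_0_INR; lia).
  assert (HN : 0 <= N) by apply pos_INR.
  apply ratio_lower with N; try assumption; try apply pos_INR.
  - rewrite <- HW; apply lt_0_INR; lia.
  - split; [|exact Hm]. eapply Rlt_le_trans; [|exact Hopt]. apply Rdiv_lt_0_compat; lra.
Qed.

End MSTRatio.

Theorem lemma2 (X : list pt) (E : list (pt * pt)) :
  NoDup X -> (2 <= length X)%nat -> is_MST X E ->
  Un_cv (fun n => ell_msth E (S n) / ell_opt X (S n)) (L_MST X / L_SMT X).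
Proof.
  intros ND Hn HM. rewrite (L_MST_eq X E HM).
  destruct (mst_setting X E ND Hn HM) as [HLs [HLm _]].
  apply (squeeze (fun k => ell_msth E k / ell_opt X k)).
  - apply Rdiv_lt_0_compat; assumption.
  - exact (ratio_above X E ND Hn HM).
  - exact (ratio_below X E ND Hn HM).
Qed.
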